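(* Let $T$ be a complete $\omega$-stable first-order theory in a countable language with infinite models. Let $\mathbf{C}$ be a class of dependence structures containing the forking dependence structure $\mathcal{D}_{(\mathcal{M},\,\text{fork})}$ of some $\mathcal{M}\models T$ such that $\emptyset\neq\mathrm{acl}(\emptyset)\neq M$ in $\mathcal{M}$. Then for every set $\Sigma$ of dependence atoms over $V$ and every dependence atom $\phi$ over $V$, $$\Sigma\vdash_{\mathcal{D}}\phi\iff\Sigma\models_{\mathbf{C}}\phi.$$
   Context: Fix a countably infinite set $V$ of variables. A dependence atom is $\mathrm{dep}(\vec x,\vec y)$ with $\vec x,\vec y$ finite sequences from $V$, $\vec y\neq\emptyset$ whenever $\vec x\neq\emptyset$. $\Sigma\vdash_{\mathcal{D}}\phi$ means $\phi$ lies in the smallest set of dependence atoms containing $\Sigma$ closed under: (a) $\mathrm{dep}(\vec x,\vec x)$ (including $\mathrm{dep}(\emptyset,\emptyset)$); (b) from $\mathrm{dep}(\vec x,\vec y\vec z)$ infer $\mathrm{dep}(\vec x\vec u,\vec y)$; (c) from $\mathrm{dep}(\vec x,\vec y)$, $\mathrm{dep}(\vec y,\vec z)$ infer $\mathrm{dep}(\vec x,\vec z)$; (d) from $\mathrm{dep}(\vec x,\vec y)$, $\mathrm{dep}(\vec x,\vec v)$ infer $\mathrm{dep}(\vec x,\vec y\vec v)$; (e) from $\mathrm{dep}(\vec x,\vec y)$ infer $\mathrm{dep}(\vec z,\vec y)$ for permutations $\vec z$ of $\vec x$. A dependence structure is $(I,\Rightarrow)$, $\Rightarrow$ a binary relation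 on finite subsets of $I$ with (D1) $\mathbf{x}\Rightarrow\mathbf{x}$; (D2) $\mathbf{x}\Rightarrow\mathbf{y}\cup\mathbf{z}$ implies $\mathbf{x}\cup\mathbf{u}\Rightarrow\mathbf{y}$; (D3) transitivity; (D4) $\mathbf{x}\Rightarrow\mathbf{y}$ and $\mathbf{x}\Rightarrow\mathbf{z}$ imply $\mathbf{x}\Rightarrow\mathbf{y}\cup\mathbf{z}$. Assignments $s:V\to I$, $s((x_0,\dots,x_{n-1}))=\{s(x_0),\dots,s(x_{n-1})\}$; $s$ satisfies $\mathrm{dep}(\vec x,\vec y)$ iff $s(\vec x)\Rightarrow s(\vec y)$; $\Sigma\models_{\mathbf{C}}\phi$ means every assignment into every structure of $\mathbf{C}$ satisfying $\Sigma$ satisfies $\phi$. Forking independence: $A\mathrel{\smile\!\!\!\!|}_C B$ iff for every finite tuple $\vec c$ from $A$, $\mathrm{RM}(\mathrm{tp}(\vec c/C\cup B))=\mathrm{RM}(\mathrm{tp}(\vec c/C))$ (RM = Morley rank). The forking dependence structure of $\mathcal{M}$ is $(M,\Rightarrow)$ with $\mathbf{x}\Rightarrow\mathbf{y}$ iff $\mathbf{y}\mathrel{\smile\!\!\!\!|}_{\mathbf{x}}\mathbf{y}$. $\mathrm{acl}$ denotes model-theoretic algebraic closure in $\mathcal{M}$. *)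

From Stdlib Require Import Arith List Permutation.
From Stdlib Require Vectors.Fin.

Record Lang : Type := {
  Fsym : Type;              (* function symbols (constants = arity 0) *)
  Rsym : Type;
  farity : Fsym -> nat;
  rarity : Rsym -> nat }.

Definition countable_lang (L : Lang) : Prop :=
  (exists f : Fsym L -> nat, forall a b, f a = f b -> a = b) /\
  (exists g : Rsym L -> nat, forall a b, g a = g b -> a = b).

Inductive term (L : Lang) : Type :=
| tvar : nat -> term L
| tapp : forall f : Fsym L, (Fin.t (farity L f) -> term L) -> term L.
Arguments tvar {L} _.
Arguments tapp {L} _ _.

Inductive form (L : Lang) : Type :=
| fEq  : term L -> term L -> form L
| fRel : forall r : Rsym L, (Fin.t (rarity L r) -> term L) -> form L
| fBot : form L
| fImp : form L -> form L -> form L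
| fAll : nat -> form L -> form L.
Arguments fEq {L} _ _.
Arguments fRel {L} _ _.
Arguments fBot {L}.
Arguments fImp {L} _ _.
Arguments fAll {L} _ _.

Definition fNot {L} (p : form L) : form L := fImp p fBot.

Fixpoint tfv {L} (t : term L) (k : nat) : Prop :=
  match t with
  | tvar n => k = n
  | tapp f a => exists i, tfv (a i) k
  end.

Fixpoint fv {L} (p : form L) (k : nat) : Prop :=
  match p with
  | fEq t1 t2 => tfv t1 k \/ tfv t2 k
  | fRel r a => exists i, tfv (a i) k
  | fBot => False
  | fImp p1 p2 => fv p1 k \/ fv p2 k
  | fAll x p1 => fv p1 k /\ k <> x
  end.

Definition sentence {L} (p : form L) : Prop := forall k, ~ fv p k.

Record Structure (L : Lang) : Type := {
  dom : Type;
  fint : forall f : Fsym L, (Fin.t (farity L f) -> dom) -> dom;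
  rint : forall r : Rsym L, (Fin.t (rarity L r) -> dom) -> Prop }.
Arguments dom {L} _.
Arguments fint {L} _ _ _.
Arguments rint {L} _ _ _.

Fixpoint teval {L} (M : Structure L) (s : nat -> dom M) (t : term L) : dom M :=
  match t with
  | tvar n => s n
  | tapp f a => fint M f (fun i => teval M s (a i))
  end.

Definition upd {D : Type} (s : nat -> D) (x : nat) (d : D) : nat -> D :=
  fun k => if Nat.eqb k x then d else s k.

Fixpoint sat {L} (M : Structure L) (s : nat -> dom M) (p : form L) : Prop :=
  match p with
  | fEq t1 t2 => teval M s t1 = teval M s t2
  | fRel r a => rint M r (fun i => teval M s (a i))
  | fBot => False
  | fImp p1 p2 => sat M s p1 -> sat M s p2
  | fAll x p1 => forall d : dom M, sat M (upd s x d) p1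
  end.

Definition is_theory {L} (T : form L -> Prop) : Prop :=
  forall p, T p -> sentence p.

Definition model {L} (T : form L -> Prop) (M : Structure L) : Prop :=
  inhabited (dom M) /\ forall p, T p -> forall s, sat M s p.

Definition complete_theory {L} (T : form L -> Prop) : Prop :=
  (exists M : Structure L, model T M) /\
  forall p, sentence p ->
    (forall M : Structure L, model T M -> forall s, sat M s p) \/
    (forall M : Structure L, model T M -> forall s, sat M s (fNot p)).

Definition infinite_type (D : Type) : Prop :=
  ~ exists l : list D, forall d, In d l.

Definition has_infinite_model {L} (T : form L -> Prop) : Prop :=
  exists M : Structure L, model T M /\ infinite_type (dom M).

Definition elem_emb {L} (M N : Structure L) (j : dom M -> dom N) : Prop :=
  forall (p : form L) (s : nat -> dom M),
    sat M s p <-> sat N (fun k => j (s k)) p.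

Definition asg {D : Type} (n : nat) (v : Fin.t n -> D) (e : nat -> D) (k : nat) : D :=
  match lt_dec k n with
  | left h => v (Fin.of_nat_lt h)
  | right _ => e k
  end.

(* (p, e) is a formula in the variables x_0..x_{n-1} with parameters in A *)
Definition over {L} {D : Type} (A : D -> Prop) (n : nat) (p : form L) (e : nat -> D) : Prop :=
  forall k, fv p k -> n <= k -> A (e k).

Definition asg1 {D : Type} (b : D) (e : nat -> D) : nat -> D := asg 1 (fun _ => b) e.

Definition omega_saturated {L} (N : Structure L) : Prop :=
  forall (A : list (dom N)) (P : form L -> (nat -> dom N) -> Prop),
    (forall p e, P p e -> over (fun a => In a A) 1 p e) ->
    (forall l : list (form L * (nat -> dom N)),
        (forall q, In q l -> P (fst q) (snd q)) ->
        exists b, forall q, In q l -> sat N (asg1 b (snd q)) (fst q)) ->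
    exists b, forall p e, P p e -> sat N (asg1 b e) p.

Definition countable_set {D : Type} (A : D -> Prop) : Prop :=
  exists f : nat -> D, forall a, A a -> exists k, f k = a.

(* omega-stability: over every countable subset A of a model there are only
   countably many complete 1-types (types realized in elementary extensions). *)
Definition omega_stable {L} (T : form L -> Prop) : Prop :=
  forall N : Structure L, model T N ->
  forall A : dom N -> Prop, countable_set A ->
  exists P : nat -> (form L -> (nat -> dom N) -> Prop),
    forall (N' : Structure L) (j : dom N -> dom N'), elem_emb N N' j ->
    forall b : dom N', exists k, forall p e, over A 1 p e ->
      (sat N' (asg1 b (fun i => j (e i))) p <-> P k p e).

Definition acl0 {L} (M : Structure L) (a : dom M) : Prop :=
  exists (p : form L) (s : nat -> dom M),
    (forall k, fv p k -> k = 0) /\ sat M (upd s 0 a) p /\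
    exists l : list (dom M), forall b, sat M (upd s 0 b) p -> In b l.

Inductive Ord : Type :=
| OZ : Ord
| OS : Ord -> Ord
| OL : (nat -> Ord) -> Ord.

Definition definable {L} (N : Structure L) (n : nat)
  (X : (Fin.t n -> dom N) -> Prop) : Prop :=
  exists (p : form L) (e : nat -> dom N), forall v, X v <-> sat N (asg n v e) p.

Fixpoint RMge {L} (N : Structure L) (n : nat)
  (X : (Fin.t n -> dom N) -> Prop) (a : Ord) : Prop :=
  match a with
  | OZ => exists v, X v
  | OS b => exists Y : nat -> ((Fin.t n -> dom N) -> Prop),
      (forall i, definable N n (Y i)) /\
      (forall i v, Y i v -> X v) /\
      (forall i i' v, i <> i' -> Y i v -> Y i' v -> False) /\
      (forall i, RMge N n (Y i) b)
  | OL f => forall k, RMge N n X (f k)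
  end.

(* RM(tp(c / C)) >= a, where M is an elementary substructure of the
   omega-saturated N via j: the minimum of the ranks of the formulas of the type *)
Definition tpRMge {L} (M N : Structure L) (j : dom M -> dom N)
  (n : nat) (c : Fin.t n -> dom M) (C : dom M -> Prop) (a : Ord) : Prop :=
  forall (p : form L) (e : nat -> dom M),
    over C n p e -> sat M (asg n c e) p ->
    RMge N n (fun v => sat N (asg n v (fun k => j (e k))) p) a.

Definition findep {L} (M N : Structure L) (j : dom M -> dom N)
  (A C B : dom M -> Prop) : Prop :=
  forall (n : nat) (c : Fin.t n -> dom M), (forall i, A (c i)) ->
  forall a : Ord,
    tpRMge M N j n c (fun x => C x \/ B x) a <-> tpRMge M N j n c C a.

Record DS : Type := {
  dcar : Type;
  ddep : (dcar -> Prop) -> (dcar -> Prop) -> Prop }.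

Definition finite_set {D : Type} (X : D -> Prop) : Prop :=
  exists l : list D, forall x, X x <-> In x l.

Definition cup {D : Type} (X Y : D -> Prop) : D -> Prop := fun a => X a \/ Y a.

(* (I, =>) is a dependence structure: => is a relation on finite subsets of I
   (subsets represented extensionally as predicates) satisfying D1-D4 *)
Definition is_DS (D : DS) : Prop :=
  (forall x x' y y' : dcar D -> Prop,
      (forall a, x a <-> x' a) -> (forall a, y a <-> y' a) ->
      ddep D x y -> ddep D x' y') /\
  (forall x, finite_set x -> ddep D x x) /\
  (forall x y z u, finite_set x -> finite_set y -> finite_set z -> finite_set u ->
      ddep D x (cup y z) -> ddep D (cup x u) y) /\
  (forall x y z, finite_set x -> finite_set y -> finite_set z ->
      ddep D x y -> ddep D y z -> ddep D x z) /\
  (forall x y z, finite_set x -> finite_set y -> finite_set z ->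
      ddep D x y -> ddep D x z -> ddep D x (cup y z)).

Definition forkDS {L} (M N : Structure L) (j : dom M -> dom N) : DS :=
  {| dcar := dom M; ddep := fun x y => findep M N j y x y |}.

(* dependence atoms dep(xs, ys) over V = nat *)
Definition atom : Type := (list nat * list nat)%type.

Definition wf_atom (a : atom) : Prop := fst a <> nil -> snd a <> nil.

Inductive derivD (Sigma : atom -> Prop) : atom -> Prop :=
| dAx : forall a, Sigma a -> derivD Sigma a
| dRefl : forall x, derivD Sigma (x, x)
| dWeak : forall x y z u, derivD Sigma (x, y ++ z) ->
    wf_atom (x ++ u, y) -> derivD Sigma (x ++ u, y)
| dTrans : forall x y z, derivD Sigma (x, y) -> derivD Sigma (y, z) ->
    wf_atom (x, z) -> derivD Sigma (x, z)
| dUnion : forall x y v, derivD Sigma (x, y) -> derivD Sigma (x, v) ->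
    derivD Sigma (x, y ++ v)
| dPerm : forall x z y, derivD Sigma (x, y) -> Permutation x z ->
    derivD Sigma (z, y).

Definition sval {D : DS} (s : nat -> dcar D) (x : list nat) : dcar D -> Prop :=
  fun i => exists v, In v x /\ s v = i.

Definition satD {D : DS} (s : nat -> dcar D) (a : atom) : Prop :=
  ddep D (sval s (fst a)) (sval s (snd a)).

Definition entailsC (C : DS -> Prop) (Sigma : atom -> Prop) (phi : atom) : Prop :=
  forall D : DS, C D -> forall s : nat -> dcar D,
    (forall a, Sigma a -> satD s a) -> satD s phi.

(* Soundness is routine: each rule of D mirrors one of the axioms D1-D4.

   For completeness, suppose Sigma does not derive dep(x, y) and let Z be the set of
   variables v with Sigma |- dep(x, v). Fix a in acl(0) and b outside acl(0), and send
   Z to a and every other variable to b. In the forking dependence structure,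
   X => Y holds whenever Y is contained in X u {a}: every tuple from Y satisfies a
   formula over X with finitely many solutions (x_i = c for c in X, and an algebraic
   formula of a otherwise), so its type has Morley rank 0 over X and over X u Y alike.
   Every atom of Sigma is of this shape, because Z is closed under Sigma. On the other
   hand b is not algebraic over a (algebraic over algebraic is algebraic), so tp(b/X)
   has Morley rank at least 1 for X contained in {a}, while tp(b/X u {b}) has rank 0;
   hence dep(x, y) fails, y containing a variable outside Z. *)
From Stdlib Require Import Arith List Permutation Lia Classical ClassicalEpsilon
  FunctionalExtensionality.
Import ListNotations.

Lemma upd_same {D : Type} (s : nat -> D) x d : upd s x d x = d.
Proof. unfold upd. now rewrite Nat.eqb_refl. Qed.

Lemma upd_other {D : Type} (s : nat -> D) x d k : k <> x -> upd s x d k = s k.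
Proof. intros H. unfold upd. destruct (Nat.eqb_spec k x); congruence. Qed.

Section Syntax.
Context {L : Lang}.

Lemma teval_agree (M : Structure L) (t : term L) (s s' : nat -> dom M) :
  (forall k, tfv t k -> s k = s' k) -> teval M s t = teval M s' t.
Proof.
  revert s s'; induction t as [n | f a IH]; intros s s' H; simpl.
  - now apply H.
  - f_equal. extensionality i. apply IH. intros k Hk. apply H. simpl. eauto.
Qed.

Lemma sat_agree (M : Structure L) (p : form L) (s s' : nat -> dom M) :
  (forall k, fv p k -> s k = s' k) -> (sat M s p <-> sat M s' p).
Proof.
  revert s s'; induction p as [t1 t2 | r ts | | p1 IH1 p2 IH2 | x p IH];
    intros s s' H; simpl.
  - rewrite (teval_agree M t1 s s'), (teval_agree M t2 s s'); [tauto | |];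
      intros; apply H; simpl; auto.
  - replace (fun i => teval M s (ts i)) with (fun i => teval M s' (ts i)); [tauto |].
    extensionality i. symmetry. apply teval_agree. intros; apply H; simpl; eauto.
  - tauto.
  - rewrite (IH1 s s'), (IH2 s s'); [tauto | |]; intros; apply H; simpl; auto.
  - assert (Hd : forall d, sat M (upd s x d) p <-> sat M (upd s' x d) p).
    { intros d. apply IH. intros k Hk. unfold upd.
      destruct (Nat.eqb_spec k x); auto. apply H. simpl. auto. }
    split; intros Hs d; apply Hd; auto.
Qed.

Lemma sat_unary (M : Structure L) (p : form L) (s : nat -> dom M) :
  (forall k, fv p k -> k = 0) -> sat M s p <-> sat M (fun _ => s 0) p.
Proof. intros Hp. apply sat_agree. intros k Hk. now rewrite (Hp k Hk). Qed.

Fixpoint tren (pi : nat -> nat) (t : term L) : term L :=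
  match t with
  | tvar n => tvar (pi n)
  | tapp f a => tapp f (fun i => tren pi (a i))
  end.

Fixpoint fren (pi : nat -> nat) (p : form L) : form L :=
  match p with
  | fEq t1 t2 => fEq (tren pi t1) (tren pi t2)
  | fRel r a => fRel r (fun i => tren pi (a i))
  | fBot => fBot
  | fImp p1 p2 => fImp (fren pi p1) (fren pi p2)
  | fAll x p1 => fAll (pi x) (fren pi p1)
  end.

Lemma teval_tren (M : Structure L) pi t s :
  teval M s (tren pi t) = teval M (fun k => s (pi k)) t.
Proof. induction t as [n | f a IH]; simpl; auto. f_equal. extensionality i. apply IH. Qed.

Lemma sat_fren (M : Structure L) pi (p : form L) s :
  (forall x y, pi x = pi y -> x = y) ->
  sat M s (fren pi p) <-> sat M (fun k => s (pi k)) p.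
Proof.
  intros Hpi; revert s; induction p as [t1 t2 | r ts | | p1 IH1 p2 IH2 | x p IH];
    intros s; simpl.
  - rewrite !teval_tren. tauto.
  - replace (fun i => teval M s (tren pi (ts i)))
      with (fun i => teval M (fun k => s (pi k)) (ts i)); [tauto |].
    extensionality i. symmetry; apply teval_tren.
  - tauto.
  - rewrite IH1, IH2. tauto.
  - assert (E : forall d, (fun k => upd s (pi x) d (pi k)) = upd (fun k => s (pi k)) x d).
    { intros d. extensionality k. destruct (Nat.eq_dec k x) as [-> | Hk].
      - now rewrite !upd_same.
      - rewrite !upd_other; auto. }
    split; intros Hs d; specialize (Hs d); [rewrite IH, E in Hs | rewrite IH, E]; auto.
Qed.

Lemma tfv_tren pi t k : tfv (tren pi t) k -> exists k', tfv t k' /\ k = pi k'.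
Proof.
  induction t as [n | f a IH]; simpl; intros H.
  - subst; eauto.
  - destruct H as [i Hi]. destruct (IH i Hi) as [k' [? ?]]. eauto.
Qed.

Lemma fv_fren pi (p : form L) k : fv (fren pi p) k -> exists k', fv p k' /\ k = pi k'.
Proof.
  revert k; induction p as [t1 t2 | r ts | | p1 IH1 p2 IH2 | x p IH]; simpl; intros k H.
  - destruct H as [H | H]; apply tfv_tren in H; destruct H as [k' [? ?]]; eauto.
  - destruct H as [i Hi]. apply tfv_tren in Hi. destruct Hi as [k' [? ?]]; eauto.
  - contradiction.
  - destruct H as [H | H]; [apply IH1 in H | apply IH2 in H];
      destruct H as [k' [? ?]]; eauto.
  - destruct H as [H Hx]. apply IH in H. destruct H as [k' [? ->]].
    exists k'. repeat split; auto.
Qed.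

Lemma sat_shift_unary (M : Structure L) (q : form L) (s : nat -> dom M) i :
  (forall k, fv q k -> k = 0) ->
  sat M s (fren (fun k => k + i) q) <-> sat M (fun _ => s i) q.
Proof. intros Hq. rewrite sat_fren by (intros; lia). now rewrite sat_unary. Qed.

Fixpoint fin_max (n : nat) : (Fin.t n -> nat) -> nat :=
  match n with
  | 0 => fun _ => 0
  | S m => fun g => Nat.max (g Fin.F1) (fin_max m (fun i => g (Fin.FS i)))
  end.

Lemma le_fin_max n (g : Fin.t n -> nat) i : g i <= fin_max n g.
Proof.
  induction i as [| n i IH]; simpl; [lia |].
  specialize (IH (fun i => g (Fin.FS i))). simpl in IH. lia.
Qed.

Fixpoint tbound (t : term L) : nat :=
  match t with
  | tvar n => S n
  | tapp f a => fin_max _ (fun i => tbound (a i))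
  end.

Fixpoint fbound (p : form L) : nat :=
  match p with
  | fEq t1 t2 => Nat.max (tbound t1) (tbound t2)
  | fRel r a => fin_max _ (fun i => tbound (a i))
  | fBot => 0
  | fImp p1 p2 => Nat.max (fbound p1) (fbound p2)
  | fAll _ p1 => fbound p1
  end.

Lemma tfv_lt_tbound t k : tfv t k -> k < tbound t.
Proof.
  induction t as [n | f a IH]; simpl; intros H; [lia |].
  destruct H as [i Hi]. pose proof (le_fin_max _ (fun i => tbound (a i)) i).
  specialize (IH i Hi). simpl in *. lia.
Qed.

Lemma fv_lt_fbound (p : form L) k : fv p k -> k < fbound p.
Proof.
  induction p as [t1 t2 | r ts | | p1 IH1 p2 IH2 | x p IH]; simpl; intros H.
  - destruct H as [H | H]; apply tfv_lt_tbound in H; lia.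
  - destruct H as [i Hi]. apply tfv_lt_tbound in Hi.
    pose proof (le_fin_max _ (fun i => tbound (ts i)) i). simpl in *. lia.
  - contradiction.
  - destruct H as [H | H]; [apply IH1 in H | apply IH2 in H]; lia.
  - destruct H; auto.
Qed.

Definition fTop : form L := fImp fBot fBot.
Definition fAnd (p q : form L) : form L := fNot (fImp p (fNot q)).
Definition fEx (x : nat) (p : form L) : form L := fNot (fAll x (fNot p)).

Fixpoint fAndL (l : list (form L)) : form L :=
  match l with [] => fTop | p :: l' => fAnd p (fAndL l') end.
Fixpoint fOrL (l : list (form L)) : form L :=
  match l with [] => fBot | p :: l' => fImp (fNot p) (fOrL l') end.
Fixpoint fExL (ys : list nat) (p : form L) : form L :=
  match ys with [] => p | y :: ys' => fEx y (fExL ys' p) end.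

Definition fAmong (ys : list nat) : form L :=
  fOrL (map (fun y => fEq (tvar 0) (tvar y)) ys).

Lemma sat_fAnd M s p q : sat M s (fAnd p q) <-> sat M s p /\ sat M s q.
Proof. simpl. tauto. Qed.

Lemma sat_fEx M s x p : sat M s (fEx x p) <-> exists d, sat M (upd s x d) p.
Proof.
  simpl. split.
  - intros H. apply NNPP. intros H'. apply H. intros d Hd. apply H'. eauto.
  - intros [d Hd] H. exact (H d Hd).
Qed.

Lemma sat_fAndL M s l : sat M s (fAndL l) <-> forall p, In p l -> sat M s p.
Proof.
  induction l as [| p l IH]; cbn [fAndL].
  - simpl. tauto.
  - rewrite sat_fAnd, IH. simpl. split; [intros [? ?] ? [<- | ?] | intros H; split]; auto.
Qed.

Lemma sat_fOrL M s l : sat M s (fOrL l) <-> exists p, In p l /\ sat M s p.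
Proof.
  induction l as [| p l IH]; simpl.
  - split; [tauto | intros [? [[] _]]].
  - rewrite IH. split.
    + intros H. destruct (classic (sat M s p)); [eauto |].
      destruct (H ltac:(auto)) as [p' [? ?]]; eauto.
    + intros [p' [[<- | ?] ?]] ?; [contradiction | eauto].
Qed.

Lemma sat_fAmong M s ys : sat M s (fAmong ys) <-> In (s 0) (map s ys).
Proof.
  unfold fAmong. rewrite sat_fOrL. split.
  - intros [f [Hf Hs]]. apply in_map_iff in Hf. destruct Hf as [y [<- Hy]].
    simpl in Hs. rewrite Hs. now apply in_map.
  - intros Hin. apply in_map_iff in Hin. destruct Hin as [y [Hy Hin]].
    exists (fEq (tvar 0) (tvar y)). split; [apply in_map_iff; eauto | simpl; auto].
Qed.

Lemma fv_fAnd p q k : fv (fAnd p q) k -> fv p k \/ fv q k.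
Proof. simpl. tauto. Qed.

Lemma fv_fEx x p k : fv (fEx x p) k -> fv p k /\ k <> x.
Proof. simpl. tauto. Qed.

Lemma fv_fAndL l k : fv (fAndL l) k -> exists p, In p l /\ fv p k.
Proof.
  induction l as [| p l IH]; simpl; [tauto |].
  intros [[H | [H | []]] | []]; eauto. destruct (IH H) as [? [? ?]]; eauto.
Qed.

Lemma fv_fOrL l k : fv (fOrL l) k -> exists p, In p l /\ fv p k.
Proof.
  induction l as [| p l IH]; simpl; [tauto |].
  intros [[H | []] | H]; eauto. destruct (IH H) as [? [? ?]]; eauto.
Qed.

Lemma fv_fAmong ys k : fv (fAmong ys) k -> k = 0 \/ In k ys.
Proof.
  intros H. apply fv_fOrL in H. destruct H as [f [Hf Hk]].
  apply in_map_iff in Hf. destruct Hf as [y [<- Hy]]. simpl in Hk.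
  destruct Hk as [-> | ->]; auto.
Qed.

Lemma fv_fExL ys p k : fv (fExL ys p) k -> fv p k /\ ~ In k ys.
Proof.
  induction ys as [| y ys IH]; simpl; [tauto |].
  intros [[[H | []] ?] | []]. apply IH in H. intuition.
Qed.

Fixpoint updl {D : Type} (s : nat -> D) (ys : list nat) (ds : list D) : nat -> D :=
  match ys, ds with
  | y :: ys', d :: ds' => updl (upd s y d) ys' ds'
  | _, _ => s
  end.

Lemma updl_notin {D : Type} ys (s : nat -> D) ds k : ~ In k ys -> updl s ys ds k = s k.
Proof.
  revert s ds; induction ys as [| y ys IH]; intros s ds H; destruct ds; simpl; auto.
  simpl in H. rewrite IH, upd_other; auto.
Qed.

Lemma map_updl {D : Type} ys (s : nat -> D) ds :
  NoDup ys -> length ys = length ds -> map (updl s ys ds) ys = ds.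
Proof.
  revert s ds; induction ys as [| y ys IH]; intros s [| d ds] Hn Hl;
    simpl in *; try discriminate; auto.
  inversion Hn; subst. rewrite updl_notin, upd_same by auto. f_equal. auto.
Qed.

Lemma sat_fExL_intro M ys s ds p :
  sat M (updl s ys ds) p -> length ys = length ds -> sat M s (fExL ys p).
Proof.
  revert s ds; induction ys as [| y ys IH]; intros s [| d ds] H Hl;
    simpl in *; try discriminate; auto.
  apply sat_fEx. exists d. eapply IH; eauto.
Qed.

Lemma sat_fExL_elim M ys s p :
  sat M s (fExL ys p) -> exists s', (forall k, ~ In k ys -> s' k = s k) /\ sat M s' p.
Proof.
  revert s; induction ys as [| y ys IH]; intros s H; simpl in *.
  - exists s; auto.
  - apply sat_fEx in H. destruct H as [d Hd]. apply IH in Hd.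
    destruct Hd as [s' [Hs' Hp]]. exists s'. split; auto.
    intros k Hk. rewrite Hs' by tauto. apply upd_other. intros ->. tauto.
Qed.

End Syntax.

Lemma asg_ge {D : Type} n (v : Fin.t n -> D) e k : n <= k -> asg n v e k = e k.
Proof. intros H. unfold asg. destruct (lt_dec k n); auto. lia. Qed.

Lemma asg_lt {D : Type} n (v : Fin.t n -> D) e k (h : k < n) :
  asg n v e k = v (Fin.of_nat_lt h).
Proof.
  unfold asg. destruct (lt_dec k n) as [h' | h']; [| lia].
  now rewrite (Fin.of_nat_ext h' h).
Qed.

Lemma asg_to_nat {D : Type} n (v : Fin.t n -> D) e i :
  asg n v e (proj1_sig (Fin.to_nat i)) = v i.
Proof.
  rewrite (asg_lt n v e _ (proj2_sig (Fin.to_nat i))). now rewrite Fin.of_nat_to_nat_inv.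
Qed.

Lemma asg_map {D D' : Type} (j : D -> D') n (v : Fin.t n -> D) e :
  (fun k => j (asg n v e k)) = asg n (fun i => j (v i)) (fun k => j (e k)).
Proof. extensionality k. unfold asg. now destruct (lt_dec k n). Qed.

Lemma asg1_0 {D : Type} (v : Fin.t 1 -> D) e : asg 1 v e 0 = v Fin.F1.
Proof. exact (asg_to_nat 1 v e Fin.F1). Qed.

Lemma vec1_ext {D : Type} (v w : Fin.t 1 -> D) : v Fin.F1 = w Fin.F1 -> v = w.
Proof.
  intros H. extensionality i. pattern i. apply Fin.caseS'; auto. intros p. inversion p.
Qed.

Lemma finite_vectors {D : Type} n (ls : Fin.t n -> list D) :
  exists vs : list (Fin.t n -> D), forall v, (forall i, In (v i) (ls i)) -> In v vs.
Proof.
  induction n as [| n IH].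
  - exists [fun i => Fin.case0 (fun _ => D) i]. intros v _. left.
    extensionality i. apply Fin.case0. exact i.
  - destruct (IH (fun i => ls (Fin.FS i))) as [vs Hvs].
    exists (flat_map (fun x => map (fun w => fun i => Fin.caseS' i (fun _ => D) x w) vs)
              (ls Fin.F1)).
    intros v Hv. apply in_flat_map. exists (v Fin.F1). split; auto.
    apply in_map_iff. exists (fun i => v (Fin.FS i)). split.
    + extensionality i. pattern i. now apply Fin.caseS'.
    + apply Hvs. intros i. apply Hv.
Qed.

Lemma injective_seq_not_in_list {D : Type} (w : nat -> D) (l : list D) :
  (forall k k', w k = w k' -> k = k') -> ~ (forall k, In (w k) l).
Proof.
  intros Hw Hl.
  assert (Hn : NoDup (map w (seq 0 (S (length l))))).
  { apply FinFun.Injective_map_NoDup; [exact Hw | apply seq_NoDup]. }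
  pose proof (@NoDup_incl_length _ _ l Hn) as Hle. rewrite length_map, length_seq in Hle.
  enough (S (length l) <= length l) by lia.
  apply Hle. intros x Hx. apply in_map_iff in Hx. destruct Hx as [k [<- _]]. apply Hl.
Qed.

Lemma infinite_injective_seq {D : Type} (P : D -> Prop) :
  (forall l : list D, exists v, P v /\ ~ In v l) ->
  exists w : nat -> D, (forall k, P (w k)) /\ (forall k k', w k = w k' -> k = k').
Proof.
  intros H.
  set (g := fun l => proj1_sig (constructive_indefinite_description _ (H l))).
  assert (Hg : forall l, P (g l) /\ ~ In (g l) l)
    by (intros l; exact (proj2_sig (constructive_indefinite_description _ (H l)))).
  (* w k avoids the list of its predecessors *)
  set (hist := fix hist k := match k with 0 => [] | S k => g (hist k) :: hist k end).
  set (w := fun k => g (hist k)).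
  assert (Hh : forall k k', k < k' -> In (w k) (hist k')).
  { intros k k'. induction k' as [| k' IH]; intros Hk; [lia |]. simpl.
    destruct (Nat.eq_dec k k'); [subst; now left | right; apply IH; lia]. }
  exists w. split; [intros k; apply Hg |].
  intros k k' E. destruct (Nat.lt_trichotomy k k') as [Hk | [Hk | Hk]]; auto; exfalso.
  - apply (proj2 (Hg (hist k'))). fold (w k'). rewrite <- E. now apply Hh.
  - apply (proj2 (Hg (hist k))). fold (w k). rewrite E. now apply Hh.
Qed.

Lemma finite_union {D E : Type} (F : D -> E -> Prop) (ds : list D) :
  (forall d, In d ds -> exists l, forall v, F d v -> In v l) ->
  exists l, forall d v, In d ds -> F d v -> In v l.
Proof.
  induction ds as [| d ds IH]; intros H.
  - exists []. intros d v [].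
  - destruct (H d (or_introl eq_refl)) as [l1 Hl1].
    destruct IH as [l2 Hl2]; [intros; apply H; now right |].
    exists (l1 ++ l2). intros d' v [<- | Hd] Hv; apply in_or_app; [left | right]; eauto.
Qed.

Lemma finite_preimage_inj {D D' : Type} (j : D -> D') (P : D -> Prop) (l : list D') :
  (forall x y, j x = j y -> x = y) ->
  (forall x, P x -> In (j x) l) -> exists l0, forall x, P x -> In x l0.
Proof.
  intros Hj; revert P; induction l as [| y l IH]; intros P H.
  - exists []. intros x Hx. apply H in Hx. contradiction.
  - destruct (classic (exists x0, j x0 = y)) as [[x0 <-] | Hy].
    + destruct (IH (fun x => P x /\ x <> x0)) as [l0 Hl0].
      { intros x [Hx Hne]. destruct (H x Hx) as [E | E]; auto. apply Hj in E. congruence. }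
      exists (x0 :: l0). intros x Hx. destruct (classic (x = x0)) as [-> | ?]; [now left | right; auto].
    + destruct (IH P) as [l0 Hl0]; [| eauto].
      intros x Hx. destruct (H x Hx) as [E | E]; auto. exfalso; eauto.
Qed.

(* The ordinals a with a <= 0: those for which RM(X) >= a holds for every nonempty X. *)
Fixpoint ord_le0 (a : Ord) : Prop :=
  match a with OZ => True | OS _ => False | OL f => forall k, ord_le0 (f k) end.

Section MorleyRank.
Context {L : Lang} (N : Structure L) (n : nat).

Lemma RMge_inhabited a X : RMge N n X a -> exists v, X v.
Proof.
  revert X; induction a as [| a IH | f IH]; simpl; intros X H; auto.
  - destruct H as [Y [_ [HY [_ HR]]]]. destruct (IH _ (HR 0)) as [v Hv]. eauto.
  - apply (IH 0). auto.
Qed.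

Lemma RMge_le0 a X : ord_le0 a -> (exists v, X v) -> RMge N n X a.
Proof. revert X; induction a; simpl; intros X Ha HX; auto. contradiction. Qed.

Lemma RMge_finite_le0 a X :
  RMge N n X a -> (exists l, forall v, X v -> In v l) -> ord_le0 a.
Proof.
  revert X; induction a as [| a IH | f IH]; simpl; intros X H [l Hl]; eauto.
  destruct H as [Y [_ [HYX [Hdisj HY]]]].
  assert (Hpick : forall i, exists v, Y i v) by (intros i; eapply RMge_inhabited, HY).
  apply choice in Hpick. destruct Hpick as [w Hw].
  apply (injective_seq_not_in_list w l); eauto.
  intros i i' E. destruct (Nat.eq_dec i i') as [| Hne]; auto.
  exfalso. apply (Hdisj i i' (w i) Hne (Hw i)). rewrite E. apply Hw.
Qed.

End MorleyRank.

Lemma RMge_infinite {L : Lang} (N : Structure L) (X : (Fin.t 1 -> dom N) -> Prop) :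
  (forall l, exists v, X v /\ ~ In v l) -> RMge N 1 X (OS OZ).
Proof.
  intros H. destruct (infinite_injective_seq X H) as [w [HwX Hw]].
  exists (fun i v => v = w i). split; [| split; [| split]].
  - intros i. exists (fEq (tvar 0) (tvar 1)), (fun _ => w i Fin.F1). intros v. simpl.
    rewrite asg1_0, asg_ge by lia. split; [intros -> | apply vec1_ext]; auto.
  - intros i v ->. apply HwX.
  - intros i i' v Hne -> E. apply Hne, Hw, E.
  - intros i. simpl. eauto.
Qed.

Lemma elem_emb_inj {L : Lang} (M N : Structure L) (j : dom M -> dom N) :
  elem_emb M N j -> forall x y, j x = j y -> x = y.
Proof.
  intros HE x y H. set (s := fun k => if Nat.eqb k 0 then x else y).
  exact (proj2 (HE (fEq (tvar 0) (tvar 1)) s) H).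
Qed.

Section AlgebraicTypes.
Context {L : Lang} (M N : Structure L) (j : dom M -> dom N) (HE : elem_emb M N j).

Definition tp_algebraic n (c : Fin.t n -> dom M) (C : dom M -> Prop) : Prop :=
  exists (p : form L) (e : nat -> dom M),
    over C n p e /\ sat M (asg n c e) p /\
    exists l, forall v, sat N (asg n v (fun k => j (e k))) p -> In v l.

Lemma tp_algebraic_mono n c (C C' : dom M -> Prop) :
  (forall x, C x -> C' x) -> tp_algebraic n c C -> tp_algebraic n c C'.
Proof. intros HC [p [e [Ho H]]]. exists p, e. split; [intros k ? ?; apply HC |]; auto. Qed.

Lemma tpRMge_algebraic n c C :
  tp_algebraic n c C -> forall a, tpRMge M N j n c C a <-> ord_le0 a.
Proof.
  intros [p [e [Ho [Hs Hl]]]] a. split.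
  - intros H. eapply RMge_finite_le0; [apply H; eauto | exact Hl].
  - intros Ha p' e' _ Hs'. apply RMge_le0; auto. exists (fun i => j (c i)).
    rewrite <- asg_map. now apply HE.
Qed.

Lemma acl0_witness a :
  acl0 M a -> exists (q : form L) (lq : list (dom M)),
    (forall k, fv q k -> k = 0) /\ sat M (fun _ => a) q /\
    (forall d, sat M (fun _ => d) q -> In d lq) /\
    (forall d, sat N (fun _ => d) q -> In d (map j lq)).
Proof.
  intros [q [s0 [Hq [Ha [l Hl]]]]].
  assert (Hfin : forall d, sat M (fun _ => d) q -> In d l).
  { intros d Hd. apply Hl. rewrite sat_unary by auto. now rewrite upd_same. }
  exists q, l. split; [| split; [| split]]; auto.
  - rewrite sat_unary in Ha by auto. now rewrite upd_same in Ha.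
  - (* transfer "every solution of q is one of l" to N *)
    set (ys := seq 1 (length l)).
    set (sM := fun k => nth (k - 1) l a).
    assert (HM : sat M sM (fAll 0 (fImp q (fAmong ys)))).
    { simpl. intros d Hd. rewrite sat_unary, upd_same in Hd by auto.
      apply Hfin, (In_nth _ _ a) in Hd. destruct Hd as [i [Hi <-]].
      apply sat_fAmong. rewrite upd_same. apply in_map_iff. exists (S i).
      rewrite upd_other by lia. split; [unfold sM; f_equal; lia |].
      unfold ys. apply in_seq. lia. }
    intros d Hd. apply HE in HM. simpl in HM.
    specialize (HM d ltac:(rewrite sat_unary, upd_same by auto; exact Hd)).
    apply sat_fAmong in HM. rewrite upd_same in HM.
    apply in_map_iff in HM. destruct HM as [y [Hy Hys]]. unfold ys in Hys.
    apply in_seq in Hys. rewrite upd_other in Hy by lia. rewrite <- Hy.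
    apply in_map, nth_In. lia.
Qed.

End AlgebraicTypes.

Section ConstantParameters.
Context {L : Lang} (M : Structure L) (p : form L).

Definition sat_params (d v : dom M) : Prop := sat M (upd (fun _ => d) 0 v) p.

Definition few_solutions (m : nat) (d : dom M) : Prop :=
  exists l, length l = m /\ forall v, sat_params d v -> In v l.

Lemma sat_params_asg1 (a v : dom M) e :
  (forall k, fv p k -> 1 <= k -> e k = a) -> sat M (asg1 v e) p <-> sat_params a v.
Proof.
  intros He. apply sat_agree. unfold asg1. intros [| k] Hk.
  - now rewrite upd_same, asg1_0.
  - rewrite upd_other, asg_ge by lia. apply He; auto; lia.
Qed.

Lemma sat_params_agree (s : nat -> dom M) d :
  (forall k, 1 <= k < fbound p -> s k = d) -> sat M s p <-> sat_params d (s 0).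
Proof.
  intros Hs. apply sat_agree. intros [| k] Hk; [now rewrite upd_same |].
  apply fv_lt_fbound in Hk. rewrite upd_other, Hs by lia. reflexivity.
Qed.

End ConstantParameters.

Section AclTransitive.
Context {L : Lang} (M : Structure L) (a : dom M) (q : form L) (lq : list (dom M)).
Hypothesis q_unary : forall k, fv q k -> k = 0.
Hypothesis q_a : sat M (fun _ => a) q.
Hypothesis q_finite : forall d, sat M (fun _ => d) q -> In d lq.
Variables (p : form L) (m : nat).

(* acl_formula(x_0) says: for some root z of q, p(x_0; z, ..., z) holds and has at most
   m solutions. The bound keeps the solution set finite at roots of q other than a. The
   parameter variables of p are tied to z by equations rather than substituted, as
   renaming is only sound for injective maps. *)
Definition param_vars : list nat := seq 1 (fbound p).
Definition tie_var : nat := S (fbound p).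
Definition witness_vars : list nat := seq (S tie_var) m.

Definition at_most_m : form L :=
  fExL witness_vars (fAll 0 (fImp p (fAmong witness_vars))).

Definition tied_body : form L :=
  fExL param_vars
    (fAnd (fAndL (map (fun k => fEq (tvar k) (tvar tie_var)) param_vars))
       (fAnd p at_most_m)).

Definition acl_formula : form L :=
  fEx tie_var (fAnd (fren (fun k => k + tie_var) q) tied_body).

Lemma in_param_vars k : In k param_vars <-> 1 <= k < tie_var.
Proof. unfold param_vars, tie_var. rewrite in_seq. lia. Qed.

Lemma in_witness_vars k : In k witness_vars -> S tie_var <= k.
Proof. unfold witness_vars. rewrite in_seq. lia. Qed.

Lemma sat_at_most_m (s : nat -> dom M) d :
  (forall k, 1 <= k < fbound p -> s k = d) ->
  sat M s at_most_m <-> few_solutions M p m d.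
Proof.
  intros Hs.
  assert (Hw : forall s' v, (forall k, ~ In k witness_vars -> s' k = s k) ->
                 sat M (upd s' 0 v) p <-> sat_params M p d v).
  { intros s' v Hs'. rewrite sat_params_agree with (d := d); [now rewrite upd_same |].
    intros k Hk. rewrite upd_other by lia. rewrite Hs'; [now apply Hs |].
    intros Hin. apply in_witness_vars in Hin. unfold tie_var in Hin. lia. }
  assert (Hmap : forall (s' : nat -> dom M) v, map (upd s' 0 v) witness_vars = map s' witness_vars).
  { intros s' v. apply map_ext_in. intros y Hy. apply in_witness_vars in Hy.
    apply upd_other. lia. }
  split.
  - intros H. apply sat_fExL_elim in H. destruct H as [s' [Hs' Hall]].
    exists (map s' witness_vars).
    split; [unfold witness_vars; now rewrite length_map, length_seq |].
    intros v Hv. simpl in Hall. specialize (Hall v (proj2 (Hw s' v Hs') Hv)).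
    apply sat_fAmong in Hall. now rewrite upd_same, Hmap in Hall.
  - intros [l [Hl Hsol]].
    assert (Hlen : length witness_vars = length l)
      by (unfold witness_vars; now rewrite length_seq).
    apply (sat_fExL_intro M _ _ l); auto. simpl. intros v Hv.
    apply sat_fAmong. rewrite upd_same, Hmap, map_updl by (auto; apply seq_NoDup).
    apply Hsol, (Hw (updl s witness_vars l)); auto. intros k Hk. now apply updl_notin.
Qed.

Lemma sat_tied_body (s : nat -> dom M) d :
  s tie_var = d -> sat M s tied_body <-> sat_params M p d (s 0) /\ few_solutions M p m d.
Proof.
  intros Hz.
  assert (Hout : forall s', (forall k, ~ In k param_vars -> s' k = s k) ->
                   s' tie_var = d /\ s' 0 = s 0).
  { intros s' Hs'. rewrite !Hs' by (rewrite in_param_vars; lia). auto. }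
  assert (Hbody : forall s', s' tie_var = d -> s' 0 = s 0 ->
            (forall k, In k param_vars -> s' k = d) ->
            sat M s' (fAnd p at_most_m) <->
            sat_params M p d (s 0) /\ few_solutions M p m d).
  { intros s' Hz' H0 HK. rewrite sat_fAnd, sat_params_agree with (d := d), H0,
      sat_at_most_m with (d := d); try reflexivity;
      intros k Hk; apply HK, in_param_vars; unfold tie_var; lia. }
  unfold tied_body. split.
  - intros H. apply sat_fExL_elim in H. destruct H as [s' [Hs' H]].
    destruct (Hout s' Hs') as [Hz' H0]. rewrite sat_fAnd, sat_fAndL in H.
    destruct H as [Heq H]. apply (Hbody s'); auto. intros k Hk. rewrite <- Hz'.
    apply (Heq (fEq (tvar k) (tvar tie_var))). apply in_map_iff. eauto.
  - intros H. set (ds := repeat d (length param_vars)).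
    apply (sat_fExL_intro M _ _ ds); [| unfold ds; now rewrite repeat_length].
    set (s' := updl s param_vars ds).
    assert (HK : forall k, In k param_vars -> s' k = d).
    { intros k Hk. apply (repeat_spec (length param_vars)). fold ds.
      rewrite <- (map_updl param_vars s ds) by (try apply seq_NoDup;
        unfold ds; now rewrite repeat_length).
      now apply in_map. }
    destruct (Hout s') as [Hz' H0]; [intros; now apply updl_notin |].
    rewrite sat_fAnd, sat_fAndL. split; [| apply Hbody; auto].
    intros f Hf. apply in_map_iff in Hf. destruct Hf as [k [<- Hk]].
    simpl. rewrite Hz'. now apply HK.
Qed.

Lemma sat_acl_formula (s : nat -> dom M) :
  sat M s acl_formula <->
  exists d, sat M (fun _ => d) q /\ sat_params M p d (s 0) /\ few_solutions M p m d.
Proof.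
  unfold acl_formula. rewrite sat_fEx.
  enough (Hd : forall d, sat M (upd s tie_var d)
                 (fAnd (fren (fun k => k + tie_var) q) tied_body) <->
               sat M (fun _ => d) q /\ sat_params M p d (s 0) /\ few_solutions M p m d)
    by (split; intros [d H]; exists d; apply Hd; auto).
  intros d. rewrite sat_fAnd, sat_shift_unary, sat_tied_body with (d := d) by (auto; apply upd_same).
  rewrite upd_same, upd_other by (unfold tie_var; lia). reflexivity.
Qed.

Lemma fv_acl_formula k : fv acl_formula k -> k = 0.
Proof.
  intros [Hk Hz]%fv_fEx. apply fv_fAnd in Hk as [Hk | Hk].
  { apply fv_fren in Hk as [k' [Hk' ->]]. apply q_unary in Hk'. subst. easy. }
  apply fv_fExL in Hk as [Hk HK]. rewrite in_param_vars in HK.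
  apply fv_fAnd in Hk as [Hk | Hk].
  - apply fv_fAndL in Hk as [f [Hf Hk]]. apply in_map_iff in Hf as [k' [<- Hk']].
    rewrite in_param_vars in Hk'. simpl in Hk. lia.
  - apply fv_fAnd in Hk as [Hk | Hk].
    + apply fv_lt_fbound in Hk. unfold tie_var in *. lia.
    + apply fv_fExL in Hk as [[[Hk | Hk] H0] Hw].
      * apply fv_lt_fbound in Hk. unfold tie_var in *. lia.
      * apply fv_fAmong in Hk as [-> | Hk]; tauto.
Qed.

Lemma acl0_of_algebraic_params (b : dom M) :
  sat_params M p a b -> few_solutions M p m a -> acl0 M b.
Proof.
  intros Hb Ha.
  destruct (finite_union (fun d v : dom M => sat M (fun _ => d) q /\ sat_params M p d v /\
                                         few_solutions M p m d) lq) as [l Hl].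
  { intros d _. destruct (classic (few_solutions M p m d)) as [[l [_ Hl]] | Hn].
    - exists l. intros v [_ [Hv _]]. auto.
    - exists []. intros v [_ [_ Hd]]. contradiction. }
  exists acl_formula, (fun _ => a). split; [exact fv_acl_formula | split].
  - apply sat_acl_formula. exists a. now rewrite upd_same.
  - exists l. intros v Hv. apply sat_acl_formula in Hv as [d Hd].
    rewrite upd_same in Hd. apply (Hl d v); [apply q_finite |]; apply Hd.
Qed.

End AclTransitive.

Section ForkingWithAcl.
Context {L : Lang} (M N : Structure L) (j : dom M -> dom N) (HE : elem_emb M N j).
Context (a : dom M) (q : form L) (lq : list (dom M)).
Hypothesis q_unary : forall k, fv q k -> k = 0.
Hypothesis q_a : sat M (fun _ => a) q.
Hypothesis q_finite : forall d, sat M (fun _ => d) q -> In d lq.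
Hypothesis q_finite_N : forall d, sat N (fun _ => d) q -> In d (map j lq).

(* The witness is the conjunction, over i < n, of x_i = c_i when c_i is in X,
   and of q(x_i) otherwise. *)
Lemma tp_algebraic_acl0 (X : dom M -> Prop) n (c : Fin.t n -> dom M) :
  (forall i, c i = a \/ X (c i)) -> tp_algebraic M N j n c X.
Proof.
  intros Hc.
  set (cn := asg n c (fun _ => a)).
  set (psi := fun k => if excluded_middle_informative (X (cn k))
                       then fEq (tvar k) (tvar (n + k)) else fren (fun i => i + k) q).
  set (e := fun k => cn (k - n)).
  assert (He : forall k, e (n + k) = cn k) by (intros k; unfold e; f_equal; lia).
  exists (fAndL (map psi (seq 0 n))), e. split; [| split].
  - intros k Hk Hnk. apply fv_fAndL in Hk as [f [Hf Hk]].
    apply in_map_iff in Hf as [i [<- Hi]]. apply in_seq in Hi. unfold psi in Hk.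
    destruct (excluded_middle_informative (X (cn i))) as [Hx | Hx].
    + simpl in Hk. destruct Hk as [-> | ->]; [lia |]. now rewrite He.
    + apply fv_fren in Hk as [k' [Hk' ->]]. apply q_unary in Hk'. lia.
  - apply sat_fAndL. intros f Hf. apply in_map_iff in Hf as [k [<- Hk]].
    apply in_seq in Hk. assert (Hkn : k < n) by lia.
    assert (Hcnk : cn k = c (Fin.of_nat_lt Hkn)) by apply asg_lt.
    assert (Hck : asg n c e k = cn k) by (rewrite Hcnk; apply asg_lt).
    unfold psi. destruct (excluded_middle_informative (X (cn k))) as [Hx | Hx].
    + simpl. now rewrite (asg_ge n c e (n + k)), He by lia.
    + apply sat_shift_unary; auto. rewrite Hck, Hcnk in *.
      destruct (Hc (Fin.of_nat_lt Hkn)) as [-> | ?]; tauto.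
  - destruct (finite_vectors n (fun i => j (c i) :: map j lq)) as [vs Hvs].
    exists vs. intros v Hv. apply Hvs. intros i. rewrite sat_fAndL in Hv.
    set (k := proj1_sig (Fin.to_nat i)).
    assert (Hk : k < n) by apply proj2_sig.
    assert (Hvk : asg n v (fun k => j (e k)) k = v i) by apply asg_to_nat.
    assert (Hck : cn k = c i) by apply asg_to_nat.
    specialize (Hv (psi k) ltac:(apply in_map, in_seq; lia)). unfold psi in Hv.
    destruct (excluded_middle_informative (X (cn k))) as [Hx | Hx].
    + left. simpl in Hv. rewrite <- Hvk, Hv, asg_ge, He, Hck by lia. reflexivity.
    + right. apply sat_shift_unary in Hv; auto. rewrite <- Hvk. now apply q_finite_N.
Qed.

Lemma findep_of_subset_acl0 (X Y : dom M -> Prop) :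
  (forall y, Y y -> y = a \/ X y) -> findep M N j Y X Y.
Proof.
  intros HY n c Hc o.
  assert (Halg : tp_algebraic M N j n c X) by (apply tp_algebraic_acl0; intros i; auto).
  rewrite !tpRMge_algebraic; auto; [tauto |].
  apply (tp_algebraic_mono M N j n c X); auto.
Qed.

Lemma tpRMge_one_not_acl0 (b : dom M) (X : dom M -> Prop) :
  ~ acl0 M b -> (forall x, X x -> x = a) -> tpRMge M N j 1 (fun _ => b) X (OS OZ).
Proof.
  intros Hb HX p e Hover Hs. apply RMge_infinite. intros l. apply NNPP. intros Hfin.
  assert (Hparams : forall v, sat M (asg1 v e) p <-> sat_params M p a v).
  { intros v. apply sat_params_asg1. intros k Hk Hk1. apply HX, Hover; auto. }
  destruct (finite_preimage_inj j (fun v => sat M (asg1 v e) p) (map (fun w => w Fin.F1) l))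
    as [lM HlM].
  { now apply elem_emb_inj. }
  { intros v Hv. apply HE in Hv. unfold asg1 in Hv. rewrite asg_map in Hv.
    apply (in_map (fun w => w Fin.F1) l (fun _ => j v)), NNPP. eauto. }
  apply Hb, (acl0_of_algebraic_params M a q lq q_unary q_a q_finite p (length lM)).
  - now apply Hparams.
  - exists lM. split; auto. intros v Hv. apply HlM, Hparams, Hv.
Qed.

Lemma not_findep_of_not_acl0 (b : dom M) (X Y : dom M -> Prop) :
  ~ acl0 M b -> (forall x, X x -> x = a) -> Y b -> ~ findep M N j Y X Y.
Proof.
  intros Hb HX HbY H.
  assert (Halg : tp_algebraic M N j 1 (fun _ => b) (fun x => X x \/ Y x)).
  { exists (fEq (tvar 0) (tvar 1)), (fun _ => b). split; [| split].
    - intros k [-> | ->] Hk; [lia | auto].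
    - simpl. now rewrite asg1_0, asg_ge by lia.
    - exists [fun _ => j b]. intros v Hv. left. apply vec1_ext.
      simpl in Hv. now rewrite asg1_0, asg_ge in Hv by lia. }
  apply (tpRMge_algebraic M N j HE 1 _ _ Halg (OS OZ)).
  apply (H 1 (fun _ => b) (fun _ => HbY)), tpRMge_one_not_acl0; auto.
Qed.

End ForkingWithAcl.

Section Derivations.
Variable Sigma : atom -> Prop.

Lemma derivD_proj u w v : derivD Sigma (u, w) -> In v w -> derivD Sigma (u, [v]).
Proof.
  intros H Hv. apply in_split in Hv as [l1 [l2 ->]].
  assert (Hv : derivD Sigma ((v :: l1 ++ l2) ++ [], [v])).
  { apply (dWeak Sigma _ [v] (l1 ++ l2) []); [apply dRefl | discriminate]. }
  rewrite app_nil_r in Hv. apply (dPerm Sigma _ (l1 ++ v :: l2)) in Hv;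
    [| apply Permutation_middle].
  eapply dTrans; eauto. discriminate.
Qed.

Lemma derivD_of_singletons x w :
  w <> [] -> (forall v, In v w -> derivD Sigma (x, [v])) -> derivD Sigma (x, w).
Proof.
  induction w as [| v [| v' w] IH]; intros Hn H; [congruence | apply H; now left |].
  apply (dUnion Sigma x [v] (v' :: w)); [apply H; now left |].
  apply IH; [discriminate | intros; apply H; now right].
Qed.

Lemma derivD_closed x u w v :
  (forall v', In v' u -> derivD Sigma (x, [v'])) -> derivD Sigma (u, w) -> In v w ->
  derivD Sigma (x, [v]).
Proof.
  intros Hu Huw Hv. apply (derivD_proj _ _ v) in Huw; auto.
  destruct u as [| u0 u].
  - apply (dWeak Sigma [] [v] [] x Huw). discriminate.
  - apply (dTrans Sigma x (u0 :: u) [v]); auto; [| discriminate].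
    apply derivD_of_singletons; auto. discriminate.
Qed.

End Derivations.

Lemma sval_finite (D : DS) (s : nat -> dcar D) x : finite_set (sval s x).
Proof. exists (map s x). intros i. unfold sval. rewrite in_map_iff. firstorder. Qed.

Lemma sval_app (D : DS) (s : nat -> dcar D) x y i :
  sval s (x ++ y) i <-> cup (sval s x) (sval s y) i.
Proof. unfold sval, cup. setoid_rewrite in_app_iff. firstorder. Qed.

Lemma sval_perm (D : DS) (s : nat -> dcar D) x z i :
  Permutation x z -> sval s x i <-> sval s z i.
Proof.
  intros Hp. unfold sval. split; intros [v [Hv E]]; exists v; split; auto.
  - now apply (Permutation_in v Hp).
  - now apply (Permutation_in v (Permutation_sym Hp)).
Qed.

Lemma derivD_sound (D : DS) (s : nat -> dcar D) (Sigma : atom -> Prop) phi :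
  is_DS D -> (forall a, Sigma a -> satD s a) -> derivD Sigma phi -> satD s phi.
Proof.
  intros [Dext [Drefl [Dweak [Dtrans Dunion]]]] HS H. unfold satD.
  induction H as [a Ha | x | x y z u _ IH _ | x y z _ IH1 _ IH2 _ | x y v _ IH1 _ IH2
                 | x z y _ IH Hp]; simpl in *.
  - exact (HS _ Ha).
  - apply Drefl, sval_finite.
  - eapply Dext; [intros i; symmetry; apply sval_app | reflexivity |].
    apply Dweak with (z := sval s z); try apply sval_finite.
    eapply Dext; [reflexivity | apply sval_app | exact IH].
  - eapply Dtrans; eauto; apply sval_finite.
  - eapply Dext; [reflexivity | intros i; symmetry; apply sval_app |].
    apply Dunion; auto; apply sval_finite.
  - eapply Dext; [intros i; apply sval_perm, Hp | reflexivity | exact IH].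
Qed.

Lemma forkDS_countermodel {L : Lang} (M N : Structure L) (j : dom M -> dom N)
  (a b : dom M) (Sigma : atom -> Prop) x y :
  elem_emb M N j -> acl0 M a -> ~ acl0 M b -> y <> [] -> ~ derivD Sigma (x, y) ->
  exists s : nat -> dom M,
    (forall at0, Sigma at0 -> @satD (forkDS M N j) s at0) /\
    ~ @satD (forkDS M N j) s (x, y).
Proof.
  intros HE Ha Hb Hy Hxy.
  destruct (acl0_witness M N j HE a Ha) as [q [lq [Hq_unary [Hq_a [Hq_fin Hq_fin_N]]]]].
  set (Z := fun v => derivD Sigma (x, [v])).
  set (s := fun v => if excluded_middle_informative (Z v) then a else b).
  assert (sZ : forall v, Z v -> s v = a)
    by (intros v Hv; unfold s; now destruct (excluded_middle_informative (Z v))).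
  assert (snZ : forall v, ~ Z v -> s v = b)
    by (intros v Hv; unfold s; now destruct (excluded_middle_informative (Z v))).
  exists s. split.
  - intros [u w] Huw. apply (findep_of_subset_acl0 M N j HE a q lq); auto.
    intros y0 [v [Hv <-]].
    destruct (classic (forall v', In v' u -> Z v')) as [Hu | Hu].
    + left. apply sZ, (derivD_closed Sigma x u w); auto. now apply dAx.
    + apply not_all_ex_not in Hu as [u0 Hu0]. apply imply_to_and in Hu0 as [Hu0 Hu0'].
      destruct (classic (Z v)) as [Hz | Hz]; [left; auto | right].
      exists u0. split; auto. now rewrite !snZ.
  - assert (Hv0 : exists v, In v y /\ ~ Z v).
    { apply NNPP. intros Hn. apply Hxy, derivD_of_singletons; auto.
      intros v Hv. apply NNPP. eauto. }
    destruct Hv0 as [v [Hv Hz]].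
    apply (not_findep_of_not_acl0 M N j HE a q lq Hq_unary Hq_a Hq_fin b); auto.
    + intros x0 [v' [Hv' <-]]. apply sZ, (derivD_proj Sigma x x); auto. apply dRefl.
    + exists v. split; auto.
Qed.

Theorem theorem4 (L : Lang) (T : form L -> Prop) (C : DS -> Prop) :
  countable_lang L ->
  is_theory T ->
  complete_theory T ->
  has_infinite_model T ->
  omega_stable T ->
  (forall D, C D -> is_DS D) ->
  (exists (M N : Structure L) (j : dom M -> dom N),
      model T M /\ elem_emb M N j /\ omega_saturated N /\
      (exists a, acl0 M a) /\ (exists a, ~ acl0 M a) /\
      C (forkDS M N j)) ->
  forall (Sigma : atom -> Prop) (phi : atom),
    (forall a, Sigma a -> wf_atom a) -> wf_atom phi ->
    (derivD Sigma phi <-> entailsC C Sigma phi).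
Proof.
  intros _ _ _ _ _ HC [M [N [j [_ [HE [_ [[a Ha] [[b Hb] HCfork]]]]]]]]
    Sigma [x y] _ Hwf.
  split.
  - intros H D HD s HS. eapply derivD_sound; eauto.
  - intros Hent. apply NNPP. intros Hxy.
    assert (Hy : y <> []).
    { intros ->. destruct x as [| x0 x]; [apply Hxy, dRefl |].
      apply Hwf; [discriminate | reflexivity]. }
    destruct (forkDS_countermodel M N j a b Sigma x y HE Ha Hb Hy Hxy) as [s [HS Hs]].
    exact (Hs (Hent _ HCfork s HS)).
Qed.
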